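(* Let $\lambda\in\mathbb{R}$ and define, for $x>0$, $$F_\lambda(x)=\psi'(x)-\frac{\lambda (4+8 x+5 x^2)}{24 x (1+x)^3 (2+x)^2}-\frac{24+120 x+283 x^2+399 x^3+345 x^4+181 x^5+51 x^6+6 x^7}{6 x^2 (1+x)^4 (2+x)^2}.$$ Then $F_\lambda$ is completely monotonic on $(0,\infty)$ if and only if $\lambda\le0$, and $-F_\lambda$ is completely monotonic on $(0,\infty)$ if and only if $\lambda\ge4$.
   Context: $\Gamma$ is Euler's gamma function, $\psi=\Gamma'/\Gamma$ is the digamma function, and $\psi'$ is its derivative (trigamma function). A function $f$ is completely monotonic on an interval $I$ if $f$ has derivatives of all orders on $I$ and $0\le(-1)^n f^{(n)}(x)<\infty$ for all $x\in I$ and all integers $n\ge0$. *)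

From Stdlib Require Import Reals Factorial ClassicalEpsilon.
Open Scope R_scope.

Definition lim_seq (u : nat -> R) : R :=
  match excluded_middle_informative (exists l, Un_cv u l) with
  | left H => proj1_sig (constructive_indefinite_description _ H)
  | right _ => 0
  end.

Definition Deriv (f : R -> R) (x : R) : R :=
  match excluded_middle_informative (exists l, derivable_pt_lim f x l) with
  | left H => proj1_sig (constructive_indefinite_description _ H)
  | right _ => 0
  end.

Fixpoint poch (x : R) (n : nat) : R :=
  match n with
  | O => 1
  | S m => poch x m * (x + INR m)
  end.

(* Euler's gamma function for x > 0, via the Euler-Gauss product:
   Gamma x = lim_{n->oo} n! n^x / (x (x+1) ... (x+n)). *)
Definition Gamma (x : R) : R :=
  lim_seq (fun n => INR (fact n) * Rpower (INR n) x / poch x (S n)).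

Definition digamma (x : R) : R := Deriv Gamma x / Gamma x.
Definition trigamma (x : R) : R := Deriv digamma x.

(* Complete monotonicity on (0, oo): f has derivatives of all orders there
   (g n is the n-th derivative on (0,oo)) and 0 <= (-1)^n f^(n)(x). *)
Definition completely_monotonic_pos (f : R -> R) : Prop :=
  exists g : nat -> R -> R,
    (forall x, 0 < x -> g O x = f x) /\
    (forall n x, 0 < x -> derivable_pt_lim (g n) x (g (S n) x)) /\
    (forall n x, 0 < x -> 0 <= (-1) ^ n * g n x).

Definition F_lam (lam x : R) : R :=
  trigamma x
  - lam * (4 + 8 * x + 5 * x ^ 2) / (24 * x * (1 + x) ^ 3 * (2 + x) ^ 2)
  - (24 + 120 * x + 283 * x ^ 2 + 399 * x ^ 3 + 345 * x ^ 4 + 181 * x ^ 5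
     + 51 * x ^ 6 + 6 * x ^ 7) / (6 * x ^ 2 * (1 + x) ^ 4 * (2 + x) ^ 2).

(* Put F_0 = psi' - B, so F_lam = F_0 - lam A.  Since psi'(x) = sum_k 1/(x+k)^2,
   both F_0 and A are sums of translates, F_0(x) = sum_k dB(x+k) and A(x) = sum_k dA(x+k), of
   the forward differences dB(x) = 1/x^2 - B(x) + B(x+1) and dA(x) = A(x) - A(x+1).  Explicit
   partial-fraction certificates write dA, dB and d4 = 4 dA - dB as nonnegative combinations of
   products of powers of 1/(x+a), a = 0..3, which are CM; and a convergent sum of translates of a
   CM function is CM.  Hence F_0, A and 4A - F_0 are CM, and sufficiency follows from
   F_lam = F_0 + (-lam) A and -F_lam = (4A - F_0) + (lam - 4) A.  Conversely, A(x) >= 1/(432x)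
   near 0 while F_0 stays bounded on (0,1], forcing lam <= 0; and for lam < 4 all terms of
   -F_lam(Y) = sum_k (d4 - (4-lam) dA)(Y+k) are negative for large Y, since d4 = O(y^-6) while
   dA >= c y^-5. *)

From Stdlib Require Import Reals Lra Lia Psatz ZArith ClassicalEpsilon Factorial.
From Coquelicot Require Import Coquelicot.
Open Scope R_scope.

Lemma lim_seq_eq (u : nat -> R) (l : R) : Un_cv u l -> lim_seq u = l.
Proof.
  intros H. unfold lim_seq.
  destruct (excluded_middle_informative _) as [e|n].
  - destruct (constructive_indefinite_description _ e) as [l' Hl']; simpl.
    exact (UL_sequence _ _ _ Hl' H).
  - exfalso; apply n; exists l; exact H.
Qed.

Lemma Deriv_eq (f : R -> R) (x l : R) : derivable_pt_lim f x l -> Deriv f x = l.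
Proof.
  intros H. unfold Deriv.
  destruct (excluded_middle_informative _) as [e|n].
  - destruct (constructive_indefinite_description _ e) as [l' Hl']; simpl.
    exact (uniqueness_limite _ _ _ _ Hl' H).
  - exfalso; apply n; exists l; exact H.
Qed.

Lemma Un_cv_const (c : R) : Un_cv (fun _ => c) c.
Proof. intros eps Heps; exists 0%nat; intros; rewrite R_dist_eq; lra. Qed.

Lemma Un_cv_scal (u : nat -> R) (c l : R) : Un_cv u l -> Un_cv (fun n => c * u n) (c * l).
Proof. intros H. apply (CV_mult (fun _ => c) u); auto. apply Un_cv_const. Qed.

Lemma inv_INR_small (eps : R) : 0 < eps ->
  exists N, (1 <= N)%nat /\ forall n, (N <= n)%nat -> / INR n < eps.
Proof.
  intros Heps. destruct (archimed (/ eps)) as [Ha _].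
  assert (Hinv : 0 < / eps) by (apply Rinv_0_lt_compat; auto).
  set (N := S (Z.to_nat (up (/ eps)))).
  assert (HN : / eps < INR N).
  { unfold N. rewrite S_INR, INR_IZR_INZ, Z2Nat.id; [lra|].
    apply le_IZR. lra. }
  exists N. split; [unfold N; lia|]. intros n Hn.
  assert (INR N <= INR n) by (apply le_INR; auto).
  rewrite <- (Rinv_inv eps). apply Rinv_lt_contravar; nra.
Qed.

Lemma sign_sq (n : nat) : (-1) ^ n * (-1) ^ n = 1.
Proof. rewrite <- pow_add. replace (n + n)%nat with (2 * n)%nat by lia. apply pow_1_even. Qed.

Lemma INR_shift_pos (y : R) (k : nat) : 0 < y -> 0 < y + INR k.
Proof. intros. assert (0 <= INR k) by apply pos_INR. lra. Qed.

Lemma derivable_pt_lim_loc (f g : R -> R) (x l d : R) : 0 < d ->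
  (forall y, Rabs (y - x) < d -> f y = g y) ->
  derivable_pt_lim f x l -> derivable_pt_lim g x l.
Proof.
  intros Hd Heq H eps Heps.
  destruct (H eps Heps) as [del Hdel].
  assert (Hm : 0 < Rmin del d) by (apply Rmin_pos; [apply cond_pos|lra]).
  exists (mkposreal _ Hm). intros h Hh0 Hh. simpl in Hh.
  rewrite <- (Heq (x+h)), <- (Heq x).
  - apply Hdel; auto. apply Rlt_le_trans with (1:=Hh); apply Rmin_l.
  - unfold Rminus; rewrite Rplus_opp_r, Rabs_R0; lra.
  - replace (x + h - x) with h by ring. apply Rlt_le_trans with (1:=Hh); apply Rmin_r.
Qed.

Lemma derivable_pt_lim_shift (f : R -> R) (x c l : R) :
  derivable_pt_lim f (x + c) l -> derivable_pt_lim (fun y => f (y + c)) x l.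
Proof.
  intros H eps Heps. destruct (H eps Heps) as [del Hdel].
  exists del. intros h Hh0 Hh.
  replace (x + h + c) with (x + c + h) by ring. apply Hdel; auto.
Qed.

Lemma derivable_pt_lim_sum (F F' : nat -> R -> R) (x : R) (N : nat) :
  (forall k, (k <= N)%nat -> derivable_pt_lim (F k) x (F' k x)) ->
  derivable_pt_lim (fun y => sum_f_R0 (fun k => F k y) N) x (sum_f_R0 (fun k => F' k x) N).
Proof.
  induction N as [|N IH]; intros H; simpl.
  - apply H; lia.
  - apply derivable_pt_lim_plus; [apply IH; intros|]; apply H; lia.
Qed.

Lemma partial_sum_tail_le (u v : nat -> R) (N P : nat) : (forall k, u k <= v k) ->
  sum_f_R0 u (N + P) - sum_f_R0 u N <= sum_f_R0 v (N + P) - sum_f_R0 v N.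
Proof.
  intros Huv. induction P as [|P IH]; rewrite ?Nat.add_0_r; [lra|].
  rewrite Nat.add_succ_r. simpl. assert (H := Huv (S (N + P))). lra.
Qed.

Lemma partial_sum_incr (u : nat -> R) (N P : nat) : (forall k, 0 <= u k) ->
  sum_f_R0 u N <= sum_f_R0 u (N + P).
Proof.
  intros Hu. induction P as [|P IH]; rewrite ?Nat.add_0_r; [lra|].
  rewrite Nat.add_succ_r. simpl. assert (H := Hu (S (N + P))). lra.
Qed.

Lemma dist_ordered (u : nat -> R) (N : nat) (eps : R) :
  (forall p q, (N <= p)%nat -> (p <= q)%nat -> Rabs (u q - u p) < eps) ->
  forall p q, (N <= p)%nat -> (N <= q)%nat -> Rabs (u p - u q) < eps.
Proof.
  intros H p q Hp Hq. destruct (Compare_dec.le_lt_dec p q) as [Hpq|Hpq].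
  - rewrite <- Rabs_Ropp, Ropp_minus_distr. apply H; lia.
  - apply H; lia.
Qed.

Definition trans_sum (f : R -> R) (N : nat) (x : R) : R :=
  sum_f_R0 (fun k => f (x + INR k)) N.

Lemma trans_sum_deriv (f f' : R -> R) (N : nat) (x : R) : 0 < x ->
  (forall y, 0 < y -> derivable_pt_lim f y (f' y)) ->
  derivable_pt_lim (trans_sum f N) x (trans_sum f' N x).
Proof.
  intros Hx Hf. apply (derivable_pt_lim_sum (fun k y => f (y + INR k)) (fun k y => f' (y + INR k))).
  intros k _. apply derivable_pt_lim_shift, Hf, INR_shift_pos, Hx.
Qed.

Lemma trans_sum_lin (F f h : R -> R) (a b : R) N x : (forall z, F z = a * f z - b * h z) ->
  trans_sum F N x = a * trans_sum f N x - b * trans_sum h N x.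
Proof.
  intros HF. unfold trans_sum. rewrite !scal_sum, <- minus_sum.
  apply sum_eq. intros k _. rewrite HF. ring.
Qed.

Lemma trans_sum_telescope (f : R -> R) N x :
  trans_sum (fun z => f z - f (z + 1)) N x = f x - f (x + INR (S N)).
Proof.
  unfold trans_sum. induction N as [|N IH]; [simpl; rewrite !Rplus_0_r; ring|].
  rewrite tech5, IH, !S_INR. replace (x + (INR N + 1) + 1) with (x + (INR N + 1 + 1)) by ring. ring.
Qed.

Lemma trans_sum_succ (f : R -> R) N x : trans_sum f (S N) x = f x + trans_sum f N (x + 1).
Proof.
  unfold trans_sum. rewrite decomp_sum by lia. simpl pred. rewrite Rplus_0_r. f_equal.
  apply sum_eq. intros i _. rewrite S_INR. f_equal. ring.
Qed.

Lemma trans_sum_limit_shift (f Sf : R -> R) x :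
  Un_cv (fun N => trans_sum f N x) (Sf x) -> Un_cv (fun N => trans_sum f N (x + 1)) (Sf (x + 1)) ->
  Sf x = f x + Sf (x + 1).
Proof.
  intros Hx Hx1. apply (UL_sequence (fun N => trans_sum f (S N) x)).
  - apply (Un_cv_ext (fun N => trans_sum f (N + 1) x)); [intros N; f_equal; lia|].
    apply (CV_shift' (fun N => trans_sum f N x)), Hx.
  - apply (Un_cv_ext (fun N => f x + trans_sum f N (x + 1))); [intros N; symmetry; apply trans_sum_succ|].
    apply CV_plus; [apply Un_cv_const|exact Hx1].
Qed.

Lemma trans_sum_limit_le_first (f : R -> R) x l :
  Un_cv (fun N => trans_sum f N x) l -> (forall y, x < y -> f y <= 0) -> l <= f x.
Proof.
  intros Hcv Hneg.
  apply (@Rle_cv_lim (fun N => trans_sum f N x) (fun _ => f x)); [|exact Hcv|apply Un_cv_const].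
  unfold trans_sum. induction n as [|N IH]; [simpl; rewrite Rplus_0_r; lra|]. rewrite tech5.
  assert (f (x + INR (S N)) <= 0) by (apply Hneg; assert (0 < INR (S N)) by (apply (lt_INR 0); lia); lra).
  lra.
Qed.

Notation CM := completely_monotonic_pos.

Lemma CM_ext (f h : R -> R) : (forall x, 0 < x -> f x = h x) -> CM f -> CM h.
Proof.
  intros E [g [H0 [H1 H2]]]. exists g; split; [|split]; auto.
  intros x Hx; rewrite H0; auto.
Qed.

Lemma signed_deriv_noninc (g : nat -> R -> R) :
  (forall n x, 0 < x -> derivable_pt_lim (g n) x (g (S n) x)) ->
  (forall n x, 0 < x -> 0 <= (-1) ^ n * g n x) ->
  forall n x y, 0 < x -> x <= y -> (-1) ^ n * g n y <= (-1) ^ n * g n x.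
Proof.
  intros G1 G2 n x y Hx Hxy.
  destruct (Req_dec x y) as [<-|Hne]; [lra|].
  destruct (MVT_cor2 (g n) (g (S n)) x y) as [c [Hc1 Hc2]]; [lra| |].
  - intros c Hc; apply G1; lra.
  - assert (Hs := G2 (S n) c ltac:(lra)). simpl in Hs.
    assert (E : (-1) ^ n * g n y - (-1) ^ n * g n x = - ((-1) * (-1) ^ n * g (S n) c) * (y - x)).
    { rewrite <- Rmult_minus_distr_l, Hc1. ring. }
    assert (0 <= (-1) * (-1) ^ n * g (S n) c * (y - x)) by (apply Rmult_le_pos; lra).
    lra.
Qed.

Lemma CM_nonneg (f : R -> R) : CM f -> forall x, 0 < x -> 0 <= f x.
Proof.
  intros [g [G0 [_ G2]]] x Hx. rewrite <- G0 by auto.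
  specialize (G2 0%nat x Hx). simpl in G2. lra.
Qed.

Lemma CM_noninc (f : R -> R) : CM f -> forall x y, 0 < x -> x <= y -> f y <= f x.
Proof.
  intros [g [G0 [G1 G2]]] x y Hx Hxy. rewrite <- !G0 by lra.
  assert (H := signed_deriv_noninc g G1 G2 0%nat x y Hx Hxy). simpl in H. lra.
Qed.

Lemma CM_plus (f h : R -> R) : CM f -> CM h -> CM (fun x => f x + h x).
Proof.
  intros [g [H0 [H1 H2]]] [k [K0 [K1 K2]]].
  exists (fun n x => g n x + k n x); split; [|split].
  - intros x Hx; rewrite H0, K0; auto.
  - intros n x Hx; apply derivable_pt_lim_plus; auto.
  - intros n x Hx. rewrite Rmult_plus_distr_l. apply Rplus_le_le_0_compat; auto.
Qed.

Lemma CM_scal (c : R) (f : R -> R) : 0 <= c -> CM f -> CM (fun x => c * f x).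
Proof.
  intros Hc [g [H0 [H1 H2]]].
  exists (fun n x => c * g n x); split; [|split].
  - intros x Hx; rewrite H0; auto.
  - intros n x Hx. apply derivable_pt_lim_scal; auto.
  - intros n x Hx. replace ((-1)^n * (c * g n x)) with (c * ((-1)^n * g n x)) by ring.
    apply Rmult_le_pos; auto.
Qed.

Lemma CM_one : CM (fun _ => 1).
Proof.
  exists (fun n _ => match n with O => 1 | S _ => 0 end); split; [|split].
  - reflexivity.
  - intros [|n] x Hx; simpl; apply derivable_pt_lim_const.
  - intros [|n] x Hx; simpl; lra.
Qed.

Fixpoint binom (n k : nat) : R :=
  match n, k with
  | _, O => 1
  | O, S _ => 0
  | S n', S k' => binom n' k' + binom n' (S k')
  end.

Lemma binom_ge0 n k : 0 <= binom n k.
Proof.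
  revert k; induction n as [|n IH]; intros [|k]; simpl; try lra.
  specialize (IH k) as A; specialize (IH (S k)) as B; lra.
Qed.

Lemma binom_big n k : (n < k)%nat -> binom n k = 0.
Proof.
  revert k; induction n as [|n IH]; intros [|k] Hk; simpl; try lia; try lra.
  rewrite !IH; try lia; lra.
Qed.

(* The Leibniz sums for consecutive orders: differentiating the n-th one gives the (n+1)-th. *)
Definition leibniz (a b : nat -> R) (n : nat) : R :=
  sum_f_R0 (fun k => binom n k * (a k * b (n - k)%nat)) n.

Lemma leibniz_step (a b : nat -> R) (n : nat) :
  sum_f_R0 (fun k => binom n k * (a (S k) * b (n - k)%nat + a k * b (S (n - k)))) n
  = leibniz a b (S n).
Proof.
  unfold leibniz.
  assert (Split : sum_f_R0 (fun k => binom n k * (a (S k) * b (n - k)%nat + a k * b (S (n - k)))) n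
    = sum_f_R0 (fun k => binom n k * (a (S k) * b (n - k)%nat)) n
    + sum_f_R0 (fun k => binom n k * (a k * b (S (n - k)))) n).
  { rewrite <- sum_plus. apply sum_eq; intros; ring. }
  assert (Pascal : sum_f_R0 (fun k => binom (S n) k * (a k * b (S n - k)%nat)) (S n)
     = a 0%nat * b (S n) + sum_f_R0 (fun j => binom n j * (a (S j) * b (n - j)%nat)) n
       + sum_f_R0 (fun j => binom n (S j) * (a (S j) * b (n - j)%nat)) n).
  { rewrite decomp_sum by lia. simpl pred. rewrite Nat.sub_0_r, Rplus_assoc, <- sum_plus.
    simpl binom. rewrite Rmult_1_l. f_equal. apply sum_eq; intros j Hj.
    simpl binom. replace (S n - S j)%nat with (n - j)%nat by lia. ring. }
  assert (Reindex : sum_f_R0 (fun k => binom n k * (a k * b (S (n - k)))) n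
     = a 0%nat * b (S n) + sum_f_R0 (fun j => binom n (S j) * (a (S j) * b (n - j)%nat)) n).
  { destruct n as [|n]; [simpl; ring|].
    rewrite decomp_sum, tech5, (binom_big (S n) (S (S n))) by lia. simpl pred.
    rewrite Nat.sub_0_r, Rmult_0_l, Rplus_0_r. simpl binom. rewrite Rmult_1_l. f_equal.
    apply sum_eq; intros j Hj. replace (S (S n - S j)) with (S n - j)%nat by lia. ring. }
  rewrite Split, Pascal, Reindex. ring.
Qed.

Lemma CM_mult (f h : R -> R) : CM f -> CM h -> CM (fun x => f x * h x).
Proof.
  intros [g [H0 [H1 H2]]] [k [K0 [K1 K2]]].
  exists (fun n x => leibniz (fun j => g j x) (fun j => k j x) n). split; [|split].
  - intros x Hx; unfold leibniz; simpl. rewrite H0, K0; auto. ring.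
  - intros n x Hx. rewrite <- leibniz_step.
    apply (derivable_pt_lim_sum (fun j y => binom n j * (g j y * k (n - j)%nat y))
              (fun j y => binom n j * (g (S j) y * k (n - j)%nat y + g j y * k (S (n - j)) y))).
    intros j Hj. apply derivable_pt_lim_scal, derivable_pt_lim_mult; auto.
  - intros n x Hx. unfold leibniz. rewrite scal_sum. apply cond_pos_sum. intros j.
    destruct (Compare_dec.le_lt_dec j n) as [Hj|Hj].
    + replace ((-1)^n) with ((-1)^j * (-1)^(n-j)) by (rewrite <- pow_add; f_equal; lia).
      replace (binom n j * (g j x * k (n - j)%nat x) * ((-1) ^ j * (-1) ^ (n - j)))
        with (binom n j * (((-1)^j * g j x) * ((-1)^(n-j) * k (n - j)%nat x))) by ring.
      apply Rmult_le_pos; [apply binom_ge0|apply Rmult_le_pos; auto].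
    + rewrite binom_big by lia. lra.
Qed.

Lemma CM_pow (f : R -> R) (m : nat) : CM f -> CM (fun x => f x ^ m).
Proof.
  intros Hf. induction m as [|m IH]; [apply CM_one|]. simpl. apply CM_mult; auto.
Qed.

Lemma CM_inv_lin (a : R) : 0 <= a -> CM (fun x => / (x + a)).
Proof.
  intros Ha.
  exists (fun n x => (-1)^n * INR (fact n) * / (x + a) ^ (S n)); split; [|split].
  - intros x Hx. simpl. field. lra.
  - intros n x Hx.
    apply is_derive_Reals. auto_derive.
    + apply Rmult_integral_contrapositive; split; [lra|apply pow_nonzero; lra].
    + change (match n with 0%nat => 1 | S _ => INR n + 1 end) with (INR (S n)).
      rewrite fact_simpl, mult_INR. simpl pow.
      field. split; [apply pow_nonzero; lra| lra].
  - intros n x Hx.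
    rewrite <- !Rmult_assoc, sign_sq, Rmult_1_l.
    apply Rmult_le_pos; [apply pos_INR|].
    apply Rlt_le, Rinv_0_lt_compat, pow_lt; lra.
Qed.
Definition loc_unif_cauchy (h : nat -> R -> R) : Prop :=
  forall a b eps, 0 < a -> 0 < eps -> exists N, forall n m y,
    (N <= n)%nat -> (N <= m)%nat -> a <= y <= b -> Rabs (h n y - h m y) < eps.

Definition limfun (h : nat -> R -> R) (y : R) : R := lim_seq (fun n => h n y).

Lemma limfun_cv (h : nat -> R -> R) :
  loc_unif_cauchy h -> forall y, 0 < y -> Un_cv (fun n => h n y) (limfun h y).
Proof.
  intros Hu y Hy. destruct (Rcomplete.R_complete (fun n => h n y)) as [l Hl].
  - intros eps Heps. destruct (Hu y y eps Hy Heps) as [N HN]. exists N.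
    intros n m Hn Hm. unfold R_dist. apply HN; auto; lra.
  - unfold limfun. rewrite (lim_seq_eq _ l Hl). exact Hl.
Qed.

Lemma loc_unif_cauchy_antideriv (h h' : nat -> R -> R) :
  (forall n y, 0 < y -> derivable_pt_lim (h n) y (h' n y)) ->
  Cauchy_crit (fun n => h n 1) -> loc_unif_cauchy h' -> loc_unif_cauchy h.
Proof.
  intros Hd Hc1 Hu a b eps Ha Heps.
  set (lo := Rmin a 1). set (hi := Rmax b 1).
  assert (Hlo : 0 < lo) by (apply Rmin_pos; lra).
  assert (Hlo1 : lo <= 1) by apply Rmin_r. assert (Hhi1 : 1 <= hi) by apply Rmax_r.
  destruct (Hc1 (eps / 2) ltac:(lra)) as [N1 HN1].
  destruct (Hu lo hi (eps / (2 * hi)) Hlo ltac:(apply Rdiv_lt_0_compat; lra)) as [N2 HN2].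
  exists (max N1 N2). intros n m y Hn Hm Hy.
  assert (Hya : lo <= y <= hi).
  { assert (lo <= a) by apply Rmin_l. assert (b <= hi) by apply Rmax_l. lra. }
  assert (At1 := HN1 n m ltac:(lia) ltac:(lia)). unfold R_dist in At1.
  assert (Drift : Rabs ((h n y - h m y) - (h n 1 - h m 1)) <= eps / 2).
  { assert (Between : forall c, Rmin 1 y <= c <= Rmax 1 y -> lo <= c <= hi).
    { intros c Hc. assert (lo <= Rmin 1 y) by (apply Rmin_glb; lra).
      assert (Rmax 1 y <= hi) by (apply Rmax_lub; lra). lra. }
    destruct (MVT_abs (fun z => h n z - h m z) (fun z => h' n z - h' m z) 1 y) as [c [Ec Hc]].
    { intros c Hc. assert (Hcr := Between c Hc).
      apply derivable_pt_lim_minus; apply Hd; lra. }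
    assert (Hcr := Between c Hc).
    assert (Hdc := HN2 n m c ltac:(lia) ltac:(lia) Hcr).
    assert (Hy1 : Rabs (y - 1) <= hi) by (apply Rabs_le; lra).
    rewrite Ec. apply Rle_trans with (eps / (2 * hi) * hi).
    - apply Rmult_le_compat; try apply Rabs_pos; lra.
    - apply Req_le. field. lra. }
  replace (h n y - h m y) with (((h n y - h m y) - (h n 1 - h m 1)) + (h n 1 - h m 1)) by ring.
  eapply Rle_lt_trans; [apply Rabs_triang|lra].
Qed.

Lemma limfun_deriv (h h' : nat -> R -> R) :
  (forall n y, 0 < y -> derivable_pt_lim (h n) y (h' n y)) ->
  loc_unif_cauchy h -> loc_unif_cauchy h' ->
  forall x, 0 < x -> derivable_pt_lim (limfun h) x (limfun h' x).
Proof.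
  intros Hd Hu Hu' x Hx.
  assert (Hd2 : 0 < x / 2) by lra. set (d := mkposreal _ Hd2).
  assert (inb : forall y, Boule x d y -> x / 2 <= y <= 2 * x).
  { intros y Hy. unfold Boule in Hy. simpl in Hy. apply Rabs_def2 in Hy. lra. }
  apply (CVU_derivable h h' (limfun h) (limfun h') x d); [| |intros n y Hy; apply Hd;
    assert (H2 := inb y Hy); lra|apply Boule_center].
  - intros eps Heps. destruct (Hu' (x / 2) (2 * x) (eps / 2) Hd2 ltac:(lra)) as [N HN].
    exists N. intros n y Hn Hy. assert (Hy2 := inb y Hy).
    destruct (limfun_cv h' Hu' y ltac:(lra) (eps / 2) ltac:(lra)) as [M HM].
    assert (A1 := HM (max N M) ltac:(lia)). unfold R_dist in A1.
    assert (A2 := HN (max N M) n y ltac:(lia) Hn Hy2).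
    replace (limfun h' y - h' n y)
      with (- (h' (max N M) y - limfun h' y) + (h' (max N M) y - h' n y)) by ring.
    eapply Rle_lt_trans; [apply Rabs_triang|]. rewrite Rabs_Ropp. lra.
  - intros y Hy. apply limfun_cv; auto. assert (H2 := inb y Hy). lra.
Qed.
Section SumOfTranslates.

Variables (f Sf : R -> R) (g : nat -> R -> R).
Hypothesis g_start : forall x, 0 < x -> g O x = f x.
Hypothesis g_deriv : forall n x, 0 < x -> derivable_pt_lim (g n) x (g (S n) x).
Hypothesis g_sign : forall n x, 0 < x -> 0 <= (-1) ^ n * g n x.
Hypothesis f_summable : forall x, 0 < x -> Un_cv (fun N => trans_sum f N x) (Sf x).

Let term (n : nat) (x : R) (k : nat) : R := (-1) ^ n * g n (x + INR k).

Lemma term_nonneg n x k : 0 < x -> 0 <= term n x k.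
Proof. intros Hx. apply g_sign, INR_shift_pos, Hx. Qed.

Lemma term_noninc n x y k : 0 < x -> x <= y -> term n y k <= term n x k.
Proof.
  intros Hx Hxy. apply (signed_deriv_noninc g g_deriv g_sign); [apply INR_shift_pos, Hx|lra].
Qed.

Lemma signed_trans_sum n N x : (-1) ^ n * trans_sum (g n) N x = sum_f_R0 (term n x) N.
Proof. unfold trans_sum. rewrite scal_sum. apply sum_eq. intros k _. unfold term. ring. Qed.

(* By the mean value theorem, one term of order m+1 is dominated by a difference of
   consecutive terms of order m; this telescopes into a bound on the partial sums. *)
Lemma term_step m x k : 0 < x -> term (S m) x (S k) <= term m x k - term m x (S k).
Proof.
  intros Hx. assert (Hk := INR_shift_pos x k Hx). unfold term. rewrite S_INR.
  destruct (MVT_cor2 (g m) (g (S m)) (x + INR k) (x + (INR k + 1))) as [c [Hc1 Hc2]];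
    [lra|intros c Hc; apply g_deriv; lra|].
  assert (Hmono := signed_deriv_noninc g g_deriv g_sign (S m) c (x + (INR k + 1)) ltac:(lra) ltac:(lra)).
  simpl pow in *.
  replace ((-1) ^ m * g m (x + INR k) - (-1) ^ m * g m (x + (INR k + 1)))
    with (-1 * (-1) ^ m * (g m (x + (INR k + 1)) - g m (x + INR k))) by ring.
  rewrite Hc1. replace (x + (INR k + 1) - (x + INR k)) with 1 by ring. lra.
Qed.

Lemma trans_sum_summable n x : 0 < x -> exists l, Un_cv (fun N => trans_sum (g n) N x) l.
Proof.
  intros Hx. destruct n as [|m].
  - exists (Sf x). apply (Un_cv_ext (fun N => trans_sum f N x)); [|auto].
    intros N. apply sum_eq. intros k _. rewrite g_start; [reflexivity|apply INR_shift_pos, Hx].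
  - assert (Bound : forall N, sum_f_R0 (term (S m) x) N <= term (S m) x 0 + term m x 0 - term m x N).
    { induction N as [|N IH]; simpl; [lra|]. assert (H := term_step m x N Hx). lra. }
    destruct (growing_cv (fun N => sum_f_R0 (term (S m) x) N)) as [l Hl].
    + intros N. simpl. assert (H := term_nonneg (S m) x (S N) Hx). lra.
    + exists (term (S m) x 0 + term m x 0). intros z [i ->].
      assert (H := Bound i). assert (H' := term_nonneg m x i Hx). lra.
    + exists ((-1) ^ S m * l).
      apply (Un_cv_ext (fun N => (-1) ^ S m * sum_f_R0 (term (S m) x) N)); [|apply Un_cv_scal, Hl].
      intros N. rewrite <- signed_trans_sum, <- Rmult_assoc, sign_sq. ring.
Qed.

(* Tails of the series decrease with x, so convergence at x is uniform on [x, oo). *)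
Lemma trans_sum_tail_noninc n N P x y : 0 < x -> x <= y ->
  Rabs (trans_sum (g n) (N + P) y - trans_sum (g n) N y)
  <= Rabs (trans_sum (g n) (N + P) x - trans_sum (g n) N x).
Proof.
  intros Hx Hxy.
  assert (Signed : forall z, 0 < z -> Rabs (trans_sum (g n) (N + P) z - trans_sum (g n) N z)
            = sum_f_R0 (term n z) (N + P) - sum_f_R0 (term n z) N).
  { intros z Hz.
    assert (E : (-1) ^ n * (trans_sum (g n) (N + P) z - trans_sum (g n) N z)
                = sum_f_R0 (term n z) (N + P) - sum_f_R0 (term n z) N).
    { rewrite Rmult_minus_distr_l, !signed_trans_sum. reflexivity. }
    assert (Pos : 0 <= sum_f_R0 (term n z) (N + P) - sum_f_R0 (term n z) N).
    { assert (H := partial_sum_incr (term n z) N P (fun k => term_nonneg n z k Hz)). lra. }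
    rewrite <- (Rmult_1_l (Rabs _)), <- (pow_1_abs n), <- Rabs_mult, E.
    apply Rabs_pos_eq, Pos. }
  rewrite !Signed by lra.
  apply partial_sum_tail_le. intros k. apply term_noninc; auto.
Qed.

Lemma trans_sum_luc n : loc_unif_cauchy (trans_sum (g n)).
Proof.
  intros a b eps Ha Heps.
  destruct (trans_sum_summable n a Ha) as [l Hl].
  destruct (CV_Cauchy _ (exist _ l Hl) eps Heps) as [N HN].
  exists N. intros p q y Hp Hq Hy.
  apply (dist_ordered (fun p => trans_sum (g n) p y) N); auto.
  intros p' q' Hp' Hpq. replace q' with (p' + (q' - p'))%nat by lia.
  eapply Rle_lt_trans; [apply (trans_sum_tail_noninc _ _ _ a); lra|].
  apply (HN (p' + (q' - p'))%nat p'); lia.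
Qed.

End SumOfTranslates.

Lemma CM_trans_sum (f Sf : R -> R) : CM f ->
  (forall x, 0 < x -> Un_cv (fun N => trans_sum f N x) (Sf x)) -> CM Sf.
Proof.
  intros [g [G0 [G1 G2]]] Hsum.
  assert (Luc := trans_sum_luc f Sf g G0 G1 G2 Hsum).
  exists (fun n => limfun (trans_sum (g n))). split; [|split].
  - intros x Hx. unfold limfun. apply lim_seq_eq.
    apply (Un_cv_ext (fun N => trans_sum f N x)); [|auto].
    intros N. apply sum_eq. intros k _. rewrite G0; [reflexivity|apply INR_shift_pos, Hx].
  - intros n. apply limfun_deriv; [|apply Luc|apply Luc].
    intros N y Hy. apply trans_sum_deriv; auto.
  - intros n x Hx.
    apply (@Rle_cv_lim (fun _ => 0) (fun N => (-1) ^ n * trans_sum (g n) N x));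
      [|apply Un_cv_const|apply Un_cv_scal, limfun_cv; auto].
    intros N. rewrite (signed_trans_sum g). apply cond_pos_sum. intros k. apply G2, INR_shift_pos, Hx.
Qed.
(* The trigamma series: psi'(x) = sum_k 1/(x+k)^2.  Write G_n(y) = n! n^y / (y(y+1)...(y+n))
   for the Euler-Gauss products defining Gamma, and differentiate ln G_n twice in y. *)

Definition log_gauss (n : nat) (y : R) : R :=
  ln (INR (fact n)) + y * ln (INR n) - trans_sum ln n y.
Definition digamma_approx (n : nat) (y : R) : R := ln (INR n) - trans_sum Rinv n y.
Definition trigamma_approx (n : nat) (y : R) : R := trans_sum (fun z => / z ^ 2) n y.

Lemma log_gauss_deriv n y : 0 < y -> derivable_pt_lim (log_gauss n) y (digamma_approx n y).
Proof.
  intros Hy. unfold log_gauss, digamma_approx.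
  replace (ln (INR n) - trans_sum Rinv n y) with (0 + ln (INR n) - trans_sum Rinv n y) by ring.
  apply derivable_pt_lim_minus; [apply derivable_pt_lim_plus|].
  - apply derivable_pt_lim_const.
  - apply is_derive_Reals. auto_derive; auto. ring.
  - apply trans_sum_deriv; [auto|]. intros z Hz. apply derivable_pt_lim_ln, Hz.
Qed.

Lemma digamma_approx_deriv n y : 0 < y -> derivable_pt_lim (digamma_approx n) y (trigamma_approx n y).
Proof.
  intros Hy. unfold digamma_approx, trigamma_approx.
  replace (trans_sum (fun z => / z ^ 2) n y)
    with (0 - trans_sum (fun z => - / z ^ 2) n y)
    by (rewrite (trans_sum_lin _ (fun z => / z ^ 2) (fun z => / z ^ 2) 0 1) by (intros; ring); ring).
  apply derivable_pt_lim_minus; [apply derivable_pt_lim_const|].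
  apply trans_sum_deriv; [auto|]. intros z Hz.
  apply is_derive_Reals. auto_derive; [lra|]. field. lra.
Qed.

Lemma trigamma_approx_tail N P y : 0 < y -> (1 <= N)%nat ->
  trigamma_approx (N + P) y - trigamma_approx N y <= / INR N - / INR (N + P).
Proof.
  intros Hy HN. induction P as [|P IH]; rewrite ?Nat.add_0_r; [lra|].
  rewrite Nat.add_succ_r. unfold trigamma_approx, trans_sum in *. rewrite tech5.
  set (K := INR (N + P)) in *.
  assert (HK : 1 <= K) by (unfold K; apply (le_INR 1); lia).
  rewrite S_INR. fold K.
  assert (/ (y + (K + 1)) ^ 2 <= / K - / (K + 1)).
  { replace (/ K - / (K + 1)) with (/ (K * (K + 1))) by (field; lra).
    apply Rinv_le_contravar; nra. }
  lra.
Qed.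

Lemma trigamma_approx_luc : loc_unif_cauchy trigamma_approx.
Proof.
  intros a b eps Ha Heps. destruct (inv_INR_small eps Heps) as [N [HN1 HN]].
  exists N. intros n m y Hn Hm Hy.
  apply (dist_ordered (fun n => trigamma_approx n y) N); auto.
  intros p q Hp Hpq. replace q with (p + (q - p))%nat by lia.
  assert (Lo : trigamma_approx p y <= trigamma_approx (p + (q - p)) y).
  { apply partial_sum_incr. intros k. apply Rlt_le, Rinv_0_lt_compat, pow_lt, INR_shift_pos. lra. }
  assert (Hi := trigamma_approx_tail p (q - p) y ltac:(lra) ltac:(lia)).
  assert (0 < / INR (p + (q - p))) by (apply Rinv_0_lt_compat, (lt_INR 0); lia).
  assert (Small := HN p Hp).
  rewrite Rabs_pos_eq; lra.
Qed.

Lemma ln_le_minus_one (w : R) : 0 < w -> ln w <= w - 1.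
Proof.
  intros Hw. destruct (Rle_or_lt (ln w) (w - 1)) as [H|H]; auto.
  apply exp_increasing in H. rewrite exp_ln in H by auto.
  assert (H2 := exp_ineq1_le (w - 1)). lra.
Qed.

Lemma ln_diff_le (a b : R) : 0 < a -> 0 < b -> ln b - ln a <= (b - a) / a.
Proof.
  intros Ha Hb. replace (ln b - ln a) with (ln (b / a)).
  - replace ((b - a) / a) with (b / a - 1) by (field; lra).
    apply ln_le_minus_one, Rdiv_lt_0_compat; auto.
  - unfold Rdiv. rewrite ln_mult, ln_Rinv; auto. apply Rinv_0_lt_compat; auto.
Qed.

Lemma ln_diff_ge (a b : R) : 0 < a -> 0 < b -> (b - a) / b <= ln b - ln a.
Proof.
  intros Ha Hb. assert (H := ln_diff_le b a Hb Ha).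
  replace ((b - a) / b) with (- ((a - b) / b)) by (field; lra). lra.
Qed.

Lemma ln_le_harmonic n : ln (INR (S n)) <= sum_f_R0 (fun k => / (1 + INR k)) n - / (1 + INR n).
Proof.
  induction n as [|n IH]; [simpl; rewrite ln_1; lra|]. rewrite tech5.
  assert (H := ln_diff_le (INR (S n)) (INR (S (S n)))
                 ltac:(apply (lt_INR 0); lia) ltac:(apply (lt_INR 0); lia)).
  rewrite !S_INR in *.
  replace (INR n + 1 + 1 - (INR n + 1)) with 1 in H by ring.
  replace (1 + (INR n + 1)) with (INR n + 1 + 1) by ring.
  replace (1 + INR n) with (INR n + 1) in IH by ring.
  assert (0 < / (INR n + 1 + 1)) by (apply Rinv_0_lt_compat; assert (0 <= INR n) by apply pos_INR; lra).
  unfold Rdiv in H. rewrite Rmult_1_l in H. lra.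
Qed.

(* At y = 1: ln n - (1 + ... + 1/(n+1)) increases and stays below 0. *)
Lemma digamma_approx_cauchy_at_1 : Cauchy_crit (fun n => digamma_approx n 1).
Proof.
  apply CV_Cauchy. unfold digamma_approx, trans_sum.
  destruct (growing_cv (fun n => ln (INR (S n)) - sum_f_R0 (fun k => / (1 + INR k)) (S n))) as [l Hl].
  - intros n. rewrite (tech5 _ (S n)).
    assert (H := ln_diff_ge (INR (S n)) (INR (S (S n)))
                   ltac:(apply (lt_INR 0); lia) ltac:(apply (lt_INR 0); lia)).
    rewrite !S_INR in *.
    replace (INR n + 1 + 1 - (INR n + 1)) with 1 in H by ring.
    assert (0 <= INR n) by apply pos_INR.
    assert (/ (1 + (INR n + 1 + 1)) <= 1 / (INR n + 1 + 1)).
    { unfold Rdiv. rewrite Rmult_1_l. apply Rinv_le_contravar; lra. }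
    lra.
  - exists 0. intros z [i ->]. rewrite tech5.
    assert (H := ln_le_harmonic i).
    assert (0 < / (1 + INR (S i))) by (apply Rinv_0_lt_compat, INR_shift_pos; lra).
    assert (0 < / (1 + INR i)) by (apply Rinv_0_lt_compat, INR_shift_pos; lra).
    lra.
  - exists l. apply (CV_shift _ 1). apply (Un_cv_ext (fun n => ln (INR (S n)) - sum_f_R0 (fun k => / (1 + INR k)) (S n))); [|exact Hl].
    intros n. rewrite Nat.add_1_r. reflexivity.
Qed.

Lemma trans_sum_ln_at_1 n : trans_sum ln n 1 = ln (INR (fact (S n))).
Proof.
  unfold trans_sum. induction n as [|n IH]; [simpl; f_equal; ring|].
  rewrite tech5, IH, (fact_simpl (S n)), mult_INR, ln_mult.
  - rewrite Rplus_comm, (S_INR (S n)). f_equal. f_equal. ring.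
  - apply (lt_INR 0). lia.
  - apply INR_fact_lt_0.
Qed.

(* At y = 1: ln G_n(1) = ln (n/(n+1)) tends to 0. *)
Lemma log_gauss_cauchy_at_1 : Cauchy_crit (fun n => log_gauss n 1).
Proof.
  apply CV_Cauchy. exists 0.
  intros eps Heps. destruct (inv_INR_small eps Heps) as [N [HN1 HN]].
  exists N. intros n Hn. unfold R_dist, log_gauss.
  assert (Hn0 : 0 < INR n) by (apply (lt_INR 0); lia).
  rewrite Rmult_1_l, trans_sum_ln_at_1, fact_simpl, mult_INR, ln_mult;
    [|apply (lt_INR 0); lia|apply INR_fact_lt_0].
  assert (H := ln_diff_le (INR n) (INR (S n)) Hn0 ltac:(apply (lt_INR 0); lia)).
  assert (H' := ln_diff_ge (INR n) (INR (S n)) Hn0 ltac:(apply (lt_INR 0); lia)).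
  rewrite S_INR in *. replace (INR n + 1 - INR n) with 1 in H, H' by ring.
  assert (Hn' := HN n Hn).
  assert (0 < 1 / (INR n + 1)) by (apply Rdiv_lt_0_compat; lra).
  rewrite Rminus_0_r, Rabs_left1; unfold Rdiv in *; lra.
Qed.

Lemma digamma_approx_luc : loc_unif_cauchy digamma_approx.
Proof.
  exact (loc_unif_cauchy_antideriv _ _ digamma_approx_deriv
           digamma_approx_cauchy_at_1 trigamma_approx_luc).
Qed.

Lemma log_gauss_luc : loc_unif_cauchy log_gauss.
Proof.
  exact (loc_unif_cauchy_antideriv _ _ log_gauss_deriv log_gauss_cauchy_at_1 digamma_approx_luc).
Qed.

Lemma poch_exp y n : 0 < y -> poch y (S n) = exp (trans_sum ln n y).
Proof.
  intros Hy. unfold trans_sum. induction n as [|n IH].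
  - simpl. rewrite Rplus_0_r, Rmult_1_l, exp_ln; auto.
  - change (poch y (S (S n))) with (poch y (S n) * (y + INR (S n))).
    rewrite IH, tech5, exp_plus, exp_ln; auto. apply INR_shift_pos, Hy.
Qed.

(* Gamma = exp (lim ln G_n), hence psi = lim d/dy ln G_n and psi' = lim d^2/dy^2 ln G_n. *)
Lemma Gamma_exp y : 0 < y -> Gamma y = exp (limfun log_gauss y).
Proof.
  intros Hy. unfold Gamma. apply lim_seq_eq.
  apply (Un_cv_ext (fun n => exp (log_gauss n y))).
  - intros n. rewrite poch_exp by auto. unfold log_gauss, Rpower, Rminus.
    rewrite !exp_plus, exp_Ropp, exp_ln by apply INR_fact_lt_0. unfold Rdiv. ring.
  - apply continuity_seq; [apply derivable_continuous_pt, derivable_pt_exp|].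
    apply limfun_cv; [apply log_gauss_luc|auto].
Qed.

Lemma digamma_limfun y : 0 < y -> digamma y = limfun digamma_approx y.
Proof.
  intros Hy. unfold digamma. rewrite Gamma_exp by auto.
  rewrite (Deriv_eq _ _ (exp (limfun log_gauss y) * limfun digamma_approx y)).
  - field. apply Rgt_not_eq, exp_pos.
  - apply (derivable_pt_lim_loc (fun z => exp (limfun log_gauss z)) _ _ _ (y / 2)); [lra| |].
    + intros z Hz. apply Rabs_def2 in Hz. rewrite Gamma_exp; auto. lra.
    + apply (derivable_pt_lim_comp (limfun log_gauss) exp); [|apply derivable_pt_lim_exp].
      apply limfun_deriv; auto using log_gauss_deriv, log_gauss_luc, digamma_approx_luc.
Qed.

Lemma trigamma_series x : 0 < x -> Un_cv (fun N => trans_sum (fun z => / z ^ 2) N x) (trigamma x).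
Proof.
  intros Hx. replace (trigamma x) with (limfun trigamma_approx x).
  - apply limfun_cv; [apply trigamma_approx_luc|auto].
  - symmetry. unfold trigamma. apply Deriv_eq.
    apply (derivable_pt_lim_loc (limfun digamma_approx) _ _ _ (x / 2)); [lra| |].
    + intros z Hz. apply Rabs_def2 in Hz. rewrite digamma_limfun; auto. lra.
    + apply limfun_deriv; auto using digamma_approx_deriv, digamma_approx_luc, trigamma_approx_luc.
Qed.
Definition A_rat (x : R) : R := (4 + 8 * x + 5 * x ^ 2) / (24 * x * (1 + x) ^ 3 * (2 + x) ^ 2).
Definition B_rat (x : R) : R := (24 + 120 * x + 283 * x ^ 2 + 399 * x ^ 3 + 345 * x ^ 4
     + 181 * x ^ 5 + 51 * x ^ 6 + 6 * x ^ 7) / (6 * x ^ 2 * (1 + x) ^ 4 * (2 + x) ^ 2).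
Definition F0 (x : R) : R := trigamma x - B_rat x.

Lemma F_lam_split lam x : 0 < x -> F_lam lam x = F0 x - lam * A_rat x.
Proof. intros Hx. unfold F_lam, F0, A_rat, B_rat. field. lra. Qed.

(* Forward differences: A = sum_k dA(.+k) and F_0 = sum_k dB(.+k), using psi'(x) - psi'(x+1) = 1/x^2. *)
Definition dA (x : R) : R := A_rat x - A_rat (x + 1).
Definition dB (x : R) : R := / x ^ 2 - (B_rat x - B_rat (x + 1)).
Definition d4 (x : R) : R := 4 * dA x - 1 * dB x.

Definition recip_mono (i j k l : nat) (x : R) : R :=
  / (x ^ i * (x + 1) ^ j * (x + 2) ^ k * (x + 3) ^ l).

Lemma CM_recip_mono i j k l : CM (recip_mono i j k l).
Proof.
  apply (CM_ext (fun x => ((/ (x + 0)) ^ i * (/ (x + 1)) ^ j) * ((/ (x + 2)) ^ k * (/ (x + 3)) ^ l))).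
  - intros x Hx. unfold recip_mono. rewrite Rplus_0_r, !pow_inv, !Rinv_mult. ring.
  - apply CM_mult; apply CM_mult; apply CM_pow; apply CM_inv_lin; lra.
Qed.

Lemma dA_certificate x : 0 < x -> dA x = 1/6 * recip_mono 1 3 3 2 x + 13/24 * recip_mono 1 1 1 2 x
  + 1/12 * recip_mono 1 0 3 1 x + 5/24 * recip_mono 1 0 2 2 x.
Proof. intros Hx. unfold dA, A_rat, recip_mono. field. lra. Qed.

Lemma dB_certificate x : 0 < x -> dB x = 4 * recip_mono 0 4 3 3 x + 4 * recip_mono 0 3 4 4 x
  + 1/6 * recip_mono 0 1 3 4 x + 1/3 * recip_mono 0 1 3 3 x + 1/2 * recip_mono 0 1 0 4 x
  + 2/3 * recip_mono 0 0 4 4 x + 17/6 * recip_mono 0 0 4 1 x.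
Proof. intros Hx. unfold dB, B_rat, recip_mono. field. lra. Qed.

Lemma d4_certificate x : 0 < x -> d4 x = 9/2 * recip_mono 1 4 3 2 x + 31/12 * recip_mono 1 3 4 2 x
  + 19/12 * recip_mono 1 0 4 1 x + 23/6 * recip_mono 1 0 3 2 x + 13/12 * recip_mono 0 4 1 1 x
  + 1/3 * recip_mono 0 4 0 2 x.
Proof. intros Hx. unfold d4, dA, dB, A_rat, B_rat, recip_mono. field. lra. Qed.

Ltac CM_certificate cert :=
  eapply CM_ext; [intros x Hx; symmetry; apply cert, Hx|];
  repeat apply CM_plus; (apply CM_scal; [lra|apply CM_recip_mono]).

Lemma CM_dA : CM dA.
Proof. CM_certificate dA_certificate. Qed.
Lemma CM_dB : CM dB.
Proof. CM_certificate dB_certificate. Qed.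
Lemma CM_d4 : CM d4.
Proof. CM_certificate d4_certificate. Qed.

Lemma vanish_at_infinity (r : R -> R) (C x : R) : 0 < x -> 0 <= C ->
  (forall y, 1 <= y -> 0 <= r y <= C / y) -> Un_cv (fun N => r (x + INR (S N))) 0.
Proof.
  intros Hx HC Hr eps Heps.
  destruct (inv_INR_small (eps / (C + 1))) as [N0 [HN1 HN]]; [apply Rdiv_lt_0_compat; lra|].
  exists N0. intros n Hn. unfold R_dist. rewrite Rminus_0_r.
  assert (Hn1 : 1 <= INR n) by (apply (le_INR 1); lia).
  assert (Hy : INR n <= x + INR (S n)) by (rewrite S_INR; lra).
  destruct (Hr (x + INR (S n)) ltac:(lra)) as [Lo Hi]. rewrite Rabs_pos_eq by exact Lo.
  assert (/ (x + INR (S n)) <= / INR n) by (apply Rinv_le_contravar; lra).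
  assert (Small := HN n Hn).
  apply Rle_lt_trans with ((C + 1) * / INR n).
  - assert (C * / (x + INR (S n)) <= C * / INR n) by (apply Rmult_le_compat_l; lra).
    assert (0 < / INR n) by (apply Rinv_0_lt_compat; lra).
    unfold Rdiv in Hi. lra.
  - replace eps with ((C + 1) * (eps / (C + 1))) by (field; lra).
    apply Rmult_lt_compat_l; lra.
Qed.

Lemma ratio_le_inv (num den C y : R) : 1 <= y -> 0 < den -> 0 <= num ->
  num * y <= C * den -> 0 <= num / den <= C / y.
Proof.
  intros Hy Hden Hnum Hle. split; [apply Rdiv_le_0_compat; lra|].
  apply Rmult_le_reg_r with (den * y); [nra|].
  unfold Rdiv. replace (num * / den * (den * y)) with (num * y) by (field; lra).
  replace (C * / y * (den * y)) with (C * den) by (field; lra). exact Hle.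
Qed.

Lemma A_rat_vanishes x : 0 < x -> Un_cv (fun N => A_rat (x + INR (S N))) 0.
Proof.
  intros Hx. apply (vanish_at_infinity _ 1); [lra|lra|]. intros y Hy.
  apply ratio_le_inv; [lra| |nra|].
  - repeat apply Rmult_lt_0_compat; try apply pow_lt; lra.
  - assert (0 <= y ^ 4) by (apply pow_le; lra). nra.
Qed.

Lemma B_rat_vanishes x : 0 < x -> Un_cv (fun N => B_rat (x + INR (S N))) 0.
Proof.
  intros Hx. apply (vanish_at_infinity _ 2); [lra|lra|]. intros y Hy.
  assert (Pows : forall k, 0 <= y ^ k) by (intros; apply pow_le; lra).
  assert (H2 := Pows 2%nat). assert (H3 := Pows 3%nat). assert (H4 := Pows 4%nat).
  assert (H5 := Pows 5%nat). assert (H6 := Pows 6%nat). assert (H7 := Pows 7%nat).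
  assert (H8 := Pows 8%nat).
  apply ratio_le_inv; [lra| |lra|nra].
  repeat apply Rmult_lt_0_compat; try apply pow_lt; lra.
Qed.

Lemma A_rat_series x : 0 < x -> Un_cv (fun N => trans_sum dA N x) (A_rat x).
Proof.
  intros Hx. apply (Un_cv_ext (fun N => A_rat x - A_rat (x + INR (S N)))).
  - intros N. symmetry. apply trans_sum_telescope.
  - assert (H := CV_minus _ _ _ _ (Un_cv_const (A_rat x)) (A_rat_vanishes x Hx)).
    rewrite Rminus_0_r in H. exact H.
Qed.

Lemma F0_series x : 0 < x -> Un_cv (fun N => trans_sum dB N x) (F0 x).
Proof.
  intros Hx.
  apply (Un_cv_ext (fun N => 1 * trans_sum (fun z => / z ^ 2) N x
                             - 1 * (B_rat x - B_rat (x + INR (S N))))).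
  - intros N. rewrite <- trans_sum_telescope. symmetry.
    apply trans_sum_lin. intros z. unfold dB. ring.
  - replace (F0 x) with (1 * trigamma x - 1 * (B_rat x - 0)) by (unfold F0; ring).
    apply CV_minus; apply Un_cv_scal; [apply trigamma_series, Hx|].
    apply CV_minus; [apply Un_cv_const|apply B_rat_vanishes, Hx].
Qed.

Lemma d4_series x : 0 < x -> Un_cv (fun N => trans_sum d4 N x) (4 * A_rat x - 1 * F0 x).
Proof.
  intros Hx. apply (Un_cv_ext (fun N => 4 * trans_sum dA N x - 1 * trans_sum dB N x)).
  - intros N. symmetry. apply trans_sum_lin. reflexivity.
  - apply CV_minus; apply Un_cv_scal; [apply A_rat_series|apply F0_series]; exact Hx.
Qed.

Lemma CM_A_rat : CM A_rat.
Proof. exact (CM_trans_sum dA A_rat CM_dA A_rat_series). Qed.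
Lemma CM_F0 : CM F0.
Proof. exact (CM_trans_sum dB F0 CM_dB F0_series). Qed.
Lemma CM_4A_minus_F0 : CM (fun x => 4 * A_rat x - 1 * F0 x).
Proof. exact (CM_trans_sum d4 _ CM_d4 d4_series). Qed.

Lemma CM_F_lam lam : lam <= 0 -> CM (F_lam lam).
Proof.
  intros Hl. apply (CM_ext (fun x => F0 x + (- lam) * A_rat x)).
  - intros x Hx. rewrite F_lam_split; auto. ring.
  - apply CM_plus; [apply CM_F0|apply CM_scal; [lra|apply CM_A_rat]].
Qed.

Lemma CM_opp_F_lam lam : 4 <= lam -> CM (fun x => - F_lam lam x).
Proof.
  intros Hl. apply (CM_ext (fun x => (4 * A_rat x - 1 * F0 x) + (lam - 4) * A_rat x)).
  - intros x Hx. rewrite F_lam_split; auto. ring.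
  - apply CM_plus; [apply CM_4A_minus_F0|apply CM_scal; [lra|apply CM_A_rat]].
Qed.
(* Necessity of lam <= 0: near 0, A(x) >= 1/(432 x) blows up while F_0 stays bounded. *)

Lemma recip_mono_pos i j k l y : 0 < y -> 0 < recip_mono i j k l y.
Proof.
  intros Hy. unfold recip_mono. apply Rinv_0_lt_compat.
  repeat apply Rmult_lt_0_compat; apply pow_lt; lra.
Qed.

Lemma recip_mono_le1 j k l x : 0 < x -> recip_mono 0 j k l x <= 1.
Proof.
  intros Hx. unfold recip_mono. simpl pow at 1. rewrite Rmult_1_l.
  assert (1 <= (x + 1) ^ j) by (apply pow_R1_Rle; lra).
  assert (1 <= (x + 2) ^ k) by (apply pow_R1_Rle; lra).
  assert (1 <= (x + 3) ^ l) by (apply pow_R1_Rle; lra).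
  assert (1 <= (x + 1) ^ j * (x + 2) ^ k) by nra.
  assert (HD : 1 <= (x + 1) ^ j * (x + 2) ^ k * (x + 3) ^ l) by nra.
  apply Rmult_le_reg_l with ((x + 1) ^ j * (x + 2) ^ k * (x + 3) ^ l); [lra|].
  rewrite Rinv_r; lra.
Qed.

Lemma dB_le x : 0 < x -> dB x <= 25 / 2.
Proof.
  intros Hx. rewrite dB_certificate by auto.
  assert (H1 := recip_mono_le1 4 3 3 x Hx). assert (H2 := recip_mono_le1 3 4 4 x Hx).
  assert (H3 := recip_mono_le1 1 3 4 x Hx). assert (H4 := recip_mono_le1 1 3 3 x Hx).
  assert (H5 := recip_mono_le1 1 0 4 x Hx). assert (H6 := recip_mono_le1 0 4 4 x Hx).
  assert (H7 := recip_mono_le1 0 4 1 x Hx). lra.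
Qed.

Lemma F0_bounded_near_0 x : 0 < x <= 1 -> F0 x <= 25 / 2 + F0 1.
Proof.
  intros Hx. rewrite (trans_sum_limit_shift dB F0 x) by (apply F0_series; lra).
  assert (H := CM_noninc F0 CM_F0 1 (x + 1) ltac:(lra) ltac:(lra)).
  assert (H' := dB_le x ltac:(lra)). lra.
Qed.

Lemma A_rat_lower x : 0 < x <= 1 -> / (432 * x) <= A_rat x.
Proof.
  intros Hx. unfold A_rat, Rdiv.
  assert (Hd : 0 < 24 * x * (1 + x) ^ 3 * (2 + x) ^ 2)
    by (repeat apply Rmult_lt_0_compat; try apply pow_lt; lra).
  apply Rle_trans with (4 * / (24 * x * (1 + x) ^ 3 * (2 + x) ^ 2)).
  - replace (/ (432 * x)) with (4 * / (1728 * x)) by (field; lra).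
    apply Rmult_le_compat_l; [lra|]. apply Rinv_le_contravar; auto.
    assert ((1 + x) ^ 3 <= 8) by (replace 8 with (2 ^ 3) by ring; apply pow_incr; lra).
    assert ((2 + x) ^ 2 <= 9) by (replace 9 with (3 ^ 2) by ring; apply pow_incr; lra).
    assert (0 < (1 + x) ^ 3) by (apply pow_lt; lra).
    assert (0 < (2 + x) ^ 2) by (apply pow_lt; lra).
    replace (1728 * x) with (24 * x * 8 * 9) by ring.
    apply Rmult_le_compat; try lra; [nra|]. apply Rmult_le_compat; lra.
  - apply Rmult_le_compat_r; [apply Rlt_le, Rinv_0_lt_compat; auto|nra].
Qed.

Lemma nonpos_of_small_bound (lam c : R) : 0 <= c ->
  (forall x, 0 < x <= 1 -> lam <= c * x) -> lam <= 0.
Proof.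
  intros Hc H. destruct (Rle_or_lt lam 0) as [Hl|Hl]; [exact Hl|].
  set (x := Rmin 1 (lam / (2 * (c + 1)))).
  assert (Hx : 0 < x) by (apply Rmin_pos; [lra|apply Rdiv_lt_0_compat; lra]).
  assert (Hx1 : x <= 1) by apply Rmin_l.
  assert (Hx2 : x * (2 * (c + 1)) <= lam).
  { apply Rmult_le_reg_r with (/ (2 * (c + 1))); [apply Rinv_0_lt_compat; lra|].
    replace (x * (2 * (c + 1)) * / (2 * (c + 1))) with x by (field; lra). apply Rmin_r. }
  assert (Hb := H x ltac:(lra)). nra.
Qed.

Lemma necessity_nonpos lam : CM (F_lam lam) -> lam <= 0.
Proof.
  intros H. destruct (Rle_or_lt lam 0) as [Hl|Hl]; [exact Hl|].
  assert (HF1 := CM_nonneg F0 CM_F0 1 ltac:(lra)).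
  apply (nonpos_of_small_bound lam (432 * (25 / 2 + F0 1))); [lra|]. intros x Hx.
  assert (Pos := CM_nonneg _ H x ltac:(lra)). rewrite F_lam_split in Pos by lra.
  assert (Bd := F0_bounded_near_0 x Hx). assert (Lo := A_rat_lower x Hx).
  assert (Blow : lam * / (432 * x) <= 25 / 2 + F0 1).
  { assert (lam * / (432 * x) <= lam * A_rat x) by (apply Rmult_le_compat_l; lra). lra. }
  apply Rmult_le_reg_r with (/ (432 * x)); [apply Rinv_0_lt_compat; lra|].
  replace (432 * (25 / 2 + F0 1) * x * / (432 * x)) with (25 / 2 + F0 1) by (field; lra).
  exact Blow.
Qed.
(* Necessity of lam >= 4: for large y, d4(y) = O(y^-6) is beaten by (4 - lam) dA(y) >= c y^-5,
   so all terms of the series -F_lam(Y) = sum_k (d4 - (4 - lam) dA)(Y + k) are negative. *)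

Lemma recip_mono_le_pow i j k l y : 0 < y -> recip_mono i j k l y <= / y ^ (i + j + k + l).
Proof.
  intros Hy. unfold recip_mono. apply Rinv_le_contravar; [apply pow_lt; lra|].
  rewrite !pow_add.
  assert (0 <= y ^ i) by (apply pow_le; lra). assert (0 <= y ^ j) by (apply pow_le; lra).
  assert (0 <= y ^ k) by (apply pow_le; lra). assert (0 <= y ^ l) by (apply pow_le; lra).
  assert (y ^ j <= (y + 1) ^ j) by (apply pow_incr; lra).
  assert (y ^ k <= (y + 2) ^ k) by (apply pow_incr; lra).
  assert (y ^ l <= (y + 3) ^ l) by (apply pow_incr; lra).
  assert (0 <= y ^ i * y ^ j) by nra. assert (0 <= y ^ i * y ^ j * y ^ k) by nra.
  apply Rmult_le_compat; try lra. apply Rmult_le_compat; try lra. apply Rmult_le_compat; lra.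
Qed.

Lemma recip_mono_le6 i j k l y : 1 <= y -> (6 <= i + j + k + l)%nat -> recip_mono i j k l y <= / y ^ 6.
Proof.
  intros Hy Hd. eapply Rle_trans; [apply recip_mono_le_pow; lra|].
  apply Rinv_le_contravar; [apply pow_lt; lra|]. apply Rle_pow; auto.
Qed.

Lemma d4_upper y : 1 <= y -> d4 y <= 14 * / y ^ 6.
Proof.
  intros Hy. rewrite d4_certificate by lra.
  assert (H1 := recip_mono_le6 1 4 3 2 y Hy ltac:(lia)).
  assert (H2 := recip_mono_le6 1 3 4 2 y Hy ltac:(lia)).
  assert (H3 := recip_mono_le6 1 0 4 1 y Hy ltac:(lia)).
  assert (H4 := recip_mono_le6 1 0 3 2 y Hy ltac:(lia)).
  assert (H5 := recip_mono_le6 0 4 1 1 y Hy ltac:(lia)).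
  assert (H6 := recip_mono_le6 0 4 0 2 y Hy ltac:(lia)).
  assert (0 < / y ^ 6) by (apply Rinv_0_lt_compat, pow_lt; lra). lra.
Qed.

Lemma dA_lower y : 1 <= y -> 13 / 2304 * / y ^ 5 <= dA y.
Proof.
  intros Hy. rewrite dA_certificate by lra.
  assert (H1 := recip_mono_pos 1 3 3 2 y ltac:(lra)).
  assert (H3 := recip_mono_pos 1 0 3 1 y ltac:(lra)).
  assert (H4 := recip_mono_pos 1 0 2 2 y ltac:(lra)).
  assert (H2 : / (96 * y ^ 5) <= recip_mono 1 1 1 2 y).
  { unfold recip_mono. apply Rinv_le_contravar.
    - repeat apply Rmult_lt_0_compat; try apply pow_lt; lra.
    - replace (96 * y ^ 5) with (y * (2 * y) * (3 * y) * (4 * y) ^ 2) by ring.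
      rewrite !pow_1.
      assert (Sq : (y + 3) ^ 2 <= (4 * y) ^ 2) by (apply pow_incr; lra).
      assert (0 <= (y + 3) ^ 2) by (apply pow_le; lra).
      assert (y * (y + 1) * (y + 2) <= y * (2 * y) * (3 * y)) by (apply Rmult_le_compat; nra).
      apply Rmult_le_compat; nra. }
  replace (13 / 2304 * / y ^ 5) with (13 / 24 * / (96 * y ^ 5)) by (field; lra).
  lra.
Qed.

Lemma d4_minus_dA_neg (d y : R) : 0 < d -> 1 + 14 * 2304 / (13 * d) <= y -> d4 y - d * dA y < 0.
Proof.
  intros Hd Hy.
  assert (HC : 0 < 14 * 2304 / (13 * d)) by (apply Rdiv_lt_0_compat; lra).
  assert (Up := d4_upper y ltac:(lra)). assert (Lo := dA_lower y ltac:(lra)).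
  assert (He : 0 < / y ^ 5) by (apply Rinv_0_lt_compat, pow_lt; lra).
  replace (/ y ^ 6) with (/ y ^ 5 * / y) in Up by (simpl; field; lra).
  set (e := / y ^ 5) in *.
  assert (Hyi : / y < 13 * d / (14 * 2304)).
  { replace (13 * d / (14 * 2304)) with (/ (14 * 2304 / (13 * d))) by (field; lra).
    apply Rinv_lt_contravar; nra. }
  assert (14 * (e * / y) < d * (13 / 2304 * e)).
  { apply Rlt_le_trans with (14 * e * (13 * d / (14 * 2304))); [|right; field].
    rewrite <- Rmult_assoc. apply Rmult_lt_compat_l; lra. }
  assert (d * (13 / 2304 * e) <= d * dA y) by (apply Rmult_le_compat_l; lra).
  lra.
Qed.

Lemma necessity_ge4 lam : CM (fun x => - F_lam lam x) -> 4 <= lam.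
Proof.
  intros H. destruct (Rle_or_lt 4 lam) as [Hl|Hl]; [exact Hl|]. exfalso.
  set (d := 4 - lam). assert (Hd : 0 < d) by (unfold d; lra).
  set (Y := 1 + 14 * 2304 / (13 * d)).
  assert (HY : 1 < Y) by (unfold Y; assert (0 < 14 * 2304 / (13 * d)) by (apply Rdiv_lt_0_compat; lra); lra).
  assert (Series : Un_cv (fun N => trans_sum (fun y => d4 y - d * dA y) N Y) (- F_lam lam Y)).
  { apply (Un_cv_ext (fun N => 1 * trans_sum d4 N Y - d * trans_sum dA N Y)).
    - intros N. symmetry. apply trans_sum_lin. intros z. ring.
    - replace (- F_lam lam Y) with (1 * (4 * A_rat Y - 1 * F0 Y) - d * A_rat Y)
        by (rewrite F_lam_split by lra; unfold d; ring).
      apply CV_minus; apply Un_cv_scal; [apply d4_series|apply A_rat_series]; lra. }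
  assert (Bound := trans_sum_limit_le_first _ Y _ Series
                     (fun y Hy => Rlt_le _ _ (d4_minus_dA_neg d y Hd ltac:(unfold Y in *; lra)))).
  assert (Neg := d4_minus_dA_neg d Y Hd ltac:(unfold Y; lra)).
  assert (Pos := CM_nonneg _ H Y ltac:(lra)). simpl in Pos. lra.
Qed.

Theorem mainTheorem7 (lam : R) :
  (completely_monotonic_pos (F_lam lam) <-> lam <= 0) /\
  (completely_monotonic_pos (fun x => - F_lam lam x) <-> 4 <= lam).
Proof.
  split; split.
  - apply necessity_nonpos.
  - apply CM_F_lam.
  - apply necessity_ge4.
  - apply CM_opp_F_lam.
Qed.
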